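(* Let $\mathsf G=(\mathsf V,\mathsf E)$ be a finite connected graph without loops or multiple edges, with discrete Laplacian $\mathcal L=\mathcal I\mathcal I^T$. Then there exists some $p\in(2,\infty)$ such that the semigroup $(e^{-t\mathcal L^2})_{t\ge0}$ is $\ell^p$-contractive, i.e. $\|e^{-t\mathcal L^2}f\|_{\ell^p(\mathsf V)}\le\|f\|_{\ell^p(\mathsf V)}$ for all $t\ge0$ and all $f$.
   Context: $V=|\mathsf V|$ and functions on the vertices are vectors in $\mathbb C^V$. After fixing an arbitrary orientation of the edges, the incidence matrix $\mathcal I\in\mathbb R^{V\times E}$ has entries $\iota_{\mathsf v\mathsf e}=-1$ if $\mathsf v$ is the initial endpoint of $\mathsf e$, $+1$ if $\mathsf v$ is the terminal endpoint of $\mathsf e$, and $0$ otherwise; $\mathcal L=\mathcal I\mathcal I^T$. *)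

From HB Require Import structures.
From mathcomp Require Import all_boot all_order all_algebra.
From mathcomp Require Import all_classical all_reals all_analysis.
From mathcomp Require Import complex.

Set Implicit Arguments.
Unset Strict Implicit.
Unset Printing Implicit Defensive.

Import Order.TTheory GRing.Theory Num.Theory numFieldNormedType.Exports.
Local Open Scope ring_scope.

Definition simple_graph (n : nat) (adj : rel 'I_n) : Prop :=
  irreflexive adj /\ symmetric adj.

Definition graph_connected (n : nat) (adj : rel 'I_n) : Prop :=
  forall x y : 'I_n, connect adj x y.

(* Edges, with a fixed orientation: the edge {x,y} with x < y is
   oriented from x (initial) to y (terminal). *)
Definition edge_type (n : nat) (adj : rel 'I_n) :=
  {p : 'I_n * 'I_n | adj p.1 p.2 && (p.1 < p.2)%N}.

Definition incidence (R : pzRingType) (n : nat) (adj : rel 'I_n)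
    (v : 'I_n) (e : edge_type adj) : R :=
  if v == (val e).1 then -1 else if v == (val e).2 then 1 else 0.

(* Discrete Laplacian L = I I^T, written entrywise:
   L_{v w} = \sum_e iota_{v e} iota_{w e}. *)
Definition laplacian (R : pzRingType) (n : nat) (adj : rel 'I_n) : 'M[R]_n :=
  \matrix_(v, w) \sum_(e : edge_type adj)
      incidence R v e * incidence R w e.

Definition expmx (R : realType) (n : nat) (A : 'M[R]_n) : 'M[R]_n :=
  \matrix_(i, j) limn ((series (fun k : nat => (A ^+ k) i j / (k`!)%:R)) : nat -> R).

Definition mxapp (R : realType) (n : nat) (M : 'M[R]_n) (f : 'I_n -> R[i])
    : 'I_n -> R[i] :=
  fun v => \sum_w (M v w)%:C%C * f w.

Definition cmod (R : realType) (z : R[i]) : R :=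
  Num.sqrt (complex.Re z ^+ 2 + complex.Im z ^+ 2).

Definition lp_norm (R : realType) (n : nat) (p : R) (f : 'I_n -> R[i]) : R :=
  (\sum_v (cmod (f v)) `^ p) `^ p^-1.

From HB Require Import structures.
From mathcomp Require Import all_boot all_order all_algebra.
From mathcomp Require Import all_classical all_reals all_analysis.
From mathcomp Require Import complex.
From mathcomp Require Import ring lra zify.
Import Order.TTheory GRing.Theory Num.Theory numFieldNormedType.Exports.
Local Open Scope ring_scope.
Set Implicit Arguments.
Unset Strict Implicit.
Unset Printing Implicit Defensive.

(* Write f = x + i y and p = 2 + q.  Connectedness gives a Poincare
   inequality |h|^2 <= K |L h|^2 for every h vanishing at some vertex.  If
   |f| is maximal at vs, with M = |f vs|, and g = f - f vs, then L g = L f and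
     Re <L^2 f, |f|^q f> = M^q |L g|^2 - sum_v (M^q - |f v|^q) Re <f v, L^2 g v>.
   Since (M^q - r^q) r <= q M^q (M - r) and M - |f v| <= |g v|, the defect is
   at most q M^q (K + |L|^2) |L g|^2 / 2, so L^2 is accretive on l^p as
   soon as q (K + |L|^2) <= 1.  Accretivity makes G(t) = |e^{-tL^2} f|_p^p
   nonincreasing: convexity of |.|^p and a second-order Taylor bound on the
   exponential series give G(t) - G(s) <= C (t - s)^2 for s <= t in [0, T],
   and summing over finer and finer subdivisions of [0, T] yields
   G(T) <= G(0). *)

Section PlaneInequalities.
Variable R : realType.
Implicit Types a b c d p q r x y M W : R.

Definition norm2 x y := Num.sqrt (x ^+ 2 + y ^+ 2).

Lemma norm2_ge0 x y : 0 <= norm2 x y.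
Proof. exact: sqrtr_ge0. Qed.

Lemma sqr_norm2 x y : norm2 x y ^+ 2 = x ^+ 2 + y ^+ 2.
Proof. by rewrite sqr_sqrtr // addr_ge0 // sqr_ge0. Qed.

Lemma norm2_eq0 x y : norm2 x y = 0 -> x = 0 /\ y = 0.
Proof.
move=> r0; have : x ^+ 2 + y ^+ 2 = 0 by rewrite -sqr_norm2 r0 expr0n.
move=> /eqP; rewrite paddr_eq0 ?sqr_ge0 // !sqrf_eq0.
by case/andP=> /eqP -> /eqP ->.
Qed.

Lemma dot2_le_norm2 a b c d : a * c + b * d <= norm2 a b * norm2 c d.
Proof.
have rW : 0 <= norm2 a b * norm2 c d by rewrite mulr_ge0 ?norm2_ge0.
have [|pos] := lerP (a * c + b * d) 0; first by move/le_trans; apply.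
rewrite -(ler_pXn2r (n := 2)) ?nnegrE ?(ltW pos) // exprMn !sqr_norm2.
have := sqr_ge0 (a * d - b * c); lra.
Qed.

Lemma norm2_le_normD x y : norm2 x y <= `|x| + `|y|.
Proof.
rewrite -[_ + _]ger0_norm ?addr_ge0 // -sqrtr_sqr ler_sqrt ?sqr_ge0 //.
rewrite sqrrD !real_normK ?num_real //.
have : 0 <= `|x| * `|y| by rewrite mulr_ge0.
lra.
Qed.

Lemma sqr_norm2B_le a b c d :
  (norm2 c d - norm2 a b) ^+ 2 <= (c - a) ^+ 2 + (d - b) ^+ 2.
Proof.
have := dot2_le_norm2 a b c d; have := sqr_norm2 a b; have := sqr_norm2 c d.
lra.
Qed.

End PlaneInequalities.

Section PowerInequalities.
Variable R : realType.
Implicit Types a b c d p q r M W : R.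

Lemma ln_le_subr1 r : 0 < r -> ln r <= r - 1.
Proof.
move=> r0; have := @le_ln1Dx R (r - 1).
by rewrite [1 + _]addrC subrK; apply; lra.
Qed.

Lemma powR_expR a p : 0 < a -> a `^ p = expR (p * ln a).
Proof. by move=> a0; rewrite /powR gt_eqF. Qed.

(* Both estimates below come from [expR u >= 1 + u] together with
   [ln u <= u - 1]. *)
Lemma powR_tangent_le p r W : 1 <= p -> 0 < r -> 0 <= W ->
  r `^ p + p * r `^ (p - 1) * (W - r) <= W `^ p.
Proof.
move=> p1 r0 W0.
have rp : r `^ p = r * r `^ (p - 1) by rewrite mulr_powRB1 ?ltW //; lra.
have rp1 : 0 <= r `^ (p - 1) by apply: powR_ge0.
have [->|Wn0] := eqVneq W 0.
  have -> : 0 `^ p = 0 by rewrite powR0 //; apply/eqP; lra.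
  rewrite rp.
  have : 0 <= (p - 1) * (r * r `^ (p - 1)).
    by apply: mulr_ge0; [lra | apply: mulr_ge0 => //; exact: ltW].
  nra.
have W0' : 0 < W by rewrite lt_def Wn0.
have lnWr : W - r <= W * (ln W - ln r).
  have := ln_le_subr1 (divr_gt0 r0 W0'); rewrite ln_div ?posrE //.
  have : W * (r / W - 1) = r - W by field; rewrite gt_eqF.
  nra.
have -> : W `^ p = W * (r `^ (p - 1) * expR ((p - 1) * (ln W - ln r))).
  rewrite -mulr_powRB1 ?ltW //; last lra.
  by rewrite !powR_expR // -expRD; congr (_ * expR _); ring.
have expWr : W * r `^ (p - 1) * (1 + (p - 1) * (ln W - ln r))
    <= W * r `^ (p - 1) * expR ((p - 1) * (ln W - ln r)).
  by rewrite ler_wpM2l ?expR_ge1Dx // mulr_ge0.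
have : r `^ (p - 1) * ((p - 1) * (W - r))
    <= r `^ (p - 1) * ((p - 1) * (W * (ln W - ln r))).
  by rewrite ler_wpM2l // ler_wpM2l //; lra.
rewrite rp; nra.
Qed.

Lemma powR_defect_le q r M : 0 <= q -> 0 <= r -> r <= M ->
  (M `^ q - r `^ q) * r <= q * M `^ q * (M - r).
Proof.
move=> q0 r0 rM.
have [->|rn0] := eqVneq r 0.
  by rewrite mulr0 mulr_ge0 ?mulr_ge0 ?powR_ge0 //; lra.
have r0' : 0 < r by rewrite lt_def rn0.
have M0 : 0 < M by apply: lt_le_trans rM.
have lnMr : r * (ln M - ln r) <= M - r.
  have := ln_le_subr1 (divr_gt0 M0 r0'); rewrite ln_div ?posrE //.
  have : r * (M / r - 1) = M - r by field; rewrite gt_eqF.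
  nra.
have -> : r `^ q = M `^ q * expR (q * (ln r - ln M)).
  by rewrite !powR_expR // -expRD; congr expR; ring.
have Mq0 := powR_gt0 q M0.
have : M `^ q * r * (1 + q * (ln r - ln M))
    <= M `^ q * r * expR (q * (ln r - ln M)).
  by rewrite ler_wpM2l ?expR_ge1Dx // mulr_ge0 ?ltW.
have : q * M `^ q * (r * (ln M - ln r)) <= q * M `^ q * (M - r).
  by apply: ler_wpM2l => //; rewrite mulr_ge0 // ltW.
nra.
Qed.

End PowerInequalities.

Section NormPowerInequalities.
Variable R : realType.
Implicit Types a b c d p q u w M : R.

Lemma norm2_powR_tangent_le p a b c d : 2 <= p ->
  norm2 a b `^ p + p * norm2 a b `^ (p - 2) * (a * (c - a) + b * (d - b))
    <= norm2 c d `^ p.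
Proof.
move=> p2; have [r0|rn0] := eqVneq (norm2 a b) 0.
  have [a0 b0] := norm2_eq0 r0.
  rewrite r0 a0 b0 (_ : 0 `^ p = 0); last by rewrite powR0 //; apply/eqP; lra.
  by rewrite !(mul0r, mulr0, add0r) powR_ge0.
have r0 : 0 < norm2 a b by rewrite lt_def rn0 norm2_ge0.
apply: le_trans (powR_tangent_le _ r0 (norm2_ge0 c d)); last lra.
rewrite lerD2l -!mulrA ler_wpM2l //; first lra.
have -> : norm2 a b `^ (p - 1) = norm2 a b `^ (p - 2) * norm2 a b.
  rewrite mulrC -mulr_powRB1 ?(ltW r0) //; last lra.
  by rewrite (_ : p - 1 - 1 = p - 2) //; ring.
rewrite -mulrA ler_wpM2l ?powR_ge0 //.
have := dot2_le_norm2 a b c d; have := sqr_norm2 a b; nra.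
Qed.

Lemma powR_defect_dot_le q M a b c d u w : 0 <= q -> norm2 a b <= M ->
  (M - norm2 a b) ^+ 2 <= c ^+ 2 + d ^+ 2 ->
  (M `^ q - norm2 a b `^ q) * (a * u + b * w)
    <= q * M `^ q / 2 * (c ^+ 2 + d ^+ 2 + u ^+ 2 + w ^+ 2).
Proof.
move=> q0 rM hc.
have r0 := norm2_ge0 a b; have rho0 := norm2_ge0 u w.
have defect0 : 0 <= M `^ q - norm2 a b `^ q.
  by rewrite subr_ge0 ge0_ler_powR // nnegrE (le_trans r0).
have := ler_wpM2l defect0 (dot2_le_norm2 a b u w).
have := ler_wpM2r rho0 (powR_defect_le q0 r0 rM).
have := sqr_ge0 (M - norm2 a b - norm2 u w).
have := sqr_norm2 u w; have := mulr_ge0 q0 (powR_ge0 M q).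
nra.
Qed.

Lemma norm2_powR_dot_ge (q X Y DX DY A D : R) : 0 <= q -> q <= 1 ->
  `|X| <= A -> `|Y| <= A -> `|DX| <= D -> `|DY| <= D ->
  - (norm2 X Y `^ q * (X * DX + Y * DY)) <= (2 * A + 1) ^+ 2 * (2 * D).
Proof.
move=> q0 q1 XA YA DXD DYD.
have A0 : 0 <= A := le_trans (normr_ge0 X) XA.
have D0 : 0 <= D := le_trans (normr_ge0 DX) DXD.
have r0 := norm2_ge0 X Y.
have rq : norm2 X Y `^ q <= 2 * A + 1.
  have rA : norm2 X Y <= 2 * A by have := norm2_le_normD X Y; lra.
  apply: (@le_trans _ _ ((norm2 X Y + 1) `^ q)).
    by rewrite ge0_ler_powR ?nnegrE //; lra.
  by apply: le_trans (ler1_powR _ _) _; lra.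
have dot_le : - (X * DX + Y * DY) <= 2 * A * D.
  have := ler_pM (normr_ge0 X) (normr_ge0 DX) XA DXD.
  have := ler_pM (normr_ge0 Y) (normr_ge0 DY) YA DYD.
  have := ler_norm (- (X * DX + Y * DY)); rewrite normrN.
  have := ler_normD (X * DX) (Y * DY); rewrite !normrM; lra.
have rhs0 : 0 <= (2 * A + 1) ^+ 2 * (2 * D) by rewrite mulr_ge0 ?sqr_ge0 //; lra.
rewrite -mulrN; have [dot_le0|dot_gt0] := lerP (- (X * DX + Y * DY)) 0.
  by apply: le_trans rhs0; rewrite mulr_ge0_le0 ?powR_ge0.
apply: le_trans (ler_pM (powR_ge0 _ _) (ltW dot_gt0) rq dot_le) _.
have : 0 <= (2 * A + 1) * (2 * D) * (A + 1) by rewrite !mulr_ge0 //; lra.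
nra.
Qed.

Lemma norm2_powR_step_le (q h X Y Xs Ys u w A D : R) :
  0 <= q -> q <= 1 -> `|X| <= A -> `|Y| <= A ->
  `|Xs - X - h * u| <= D -> `|Ys - Y - h * w| <= D ->
  norm2 X Y `^ (2 + q) - norm2 Xs Ys `^ (2 + q) <=
    - ((2 + q) * h) * (norm2 X Y `^ q * (X * u + Y * w))
    + (2 + q) * ((2 * A + 1) ^+ 2 * (2 * D)).
Proof.
move=> q0 q1 XA YA DXD DYD; have p0 : 0 <= 2 + q by lra.
have p2 : 2 <= 2 + q by lra.
have := norm2_powR_tangent_le X Y Xs Ys p2.
rewrite (_ : 2 + q - 2 = q); last by ring.
have := ler_wpM2l p0 (norm2_powR_dot_ge q0 q1 XA YA DXD DYD).
rewrite (_ : X * (Xs - X - h * u) + Y * (Ys - Y - h * w) =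
  (X * (Xs - X) + Y * (Ys - Y)) - h * (X * u + Y * w)); last by ring.
move: (X * (Xs - X) + Y * (Ys - Y)) (X * u + Y * w) => E U; lra.
Qed.

End NormPowerInequalities.

Section MatrixVectorProduct.
Variables (R : pzRingType) (n : nat).
Implicit Types (A B : 'M[R]_n) (x y : 'I_n -> R).

Definition mxv A x : 'I_n -> R := fun i => \sum_j A i j * x j.

Definition dotv x y : R := \sum_i x i * y i.

Lemma mxvM A B x : mxv (A * B) x = mxv A (mxv B x).
Proof.
apply: funext => i; rewrite /mxv.
under eq_bigr do rewrite -mulmxE mxE mulr_suml.
rewrite exchange_big /=; apply: eq_bigr => l _.
by rewrite mulr_sumr; apply: eq_bigr => j _; rewrite mulrA.
Qed.

Lemma mxv_subr_const A x c : (forall i, \sum_j A i j = 0) ->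
  mxv A (fun j => x j - c) = mxv A x.
Proof.
move=> A_row0; apply: funext => i; rewrite /mxv.
under eq_bigr do rewrite mulrBr.
by rewrite sumrB -mulr_suml A_row0 mul0r subr0.
Qed.

Lemma mxv1 x : mxv 1%:M x = x.
Proof.
apply: funext => i; rewrite /mxv (bigD1 i) //= mxE eqxx mul1r big1 ?addr0 //.
by move=> j ji; rewrite mxE eq_sym (negbTE ji) mul0r.
Qed.

End MatrixVectorProduct.

Section SymmetricMatrix.
Variables (R : comPzRingType) (n : nat).

Lemma dotv_mxv_sym (A : 'M[R]_n) (x y : 'I_n -> R) : (forall i j, A i j = A j i) ->
  dotv (mxv A x) y = dotv x (mxv A y).
Proof.
move=> A_sym; rewrite /dotv /mxv.
under eq_bigr do rewrite mulr_suml.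
rewrite exchange_big /=; apply: eq_bigr => j _.
rewrite mulr_sumr; apply: eq_bigr => i _; rewrite A_sym; ring.
Qed.

End SymmetricMatrix.

Section RealMatrixVectorProduct.
Variables (R : realType) (n : nat).
Implicit Types (A : 'M[R]_n) (a x y : 'I_n -> R).

Lemma dotvv x : dotv x x = \sum_i x i ^+ 2.
Proof. by apply: eq_bigr => i _; rewrite expr2. Qed.

Lemma dotvv_ge0 x : 0 <= dotv x x.
Proof. by rewrite dotvv sumr_ge0 // => i _; rewrite sqr_ge0. Qed.

Lemma sqr_sum_le a : (\sum_j a j) ^+ 2 <= n%:R * \sum_j a j ^+ 2.
Proof.
have dbl : \sum_(i < n) \sum_(j < n) a j ^+ 2 = n%:R * \sum_j a j ^+ 2.
  by rewrite sumr_const card_ord mulr_natl.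
have -> : n%:R * \sum_j a j ^+ 2 = \sum_i \sum_j (a i ^+ 2 + a j ^+ 2) / 2.
  under [RHS]eq_bigr do rewrite -mulr_suml big_split /=.
  by rewrite -mulr_suml big_split /= [X in X + _]exchange_big /= dbl; field.
rewrite [X in X <= _]expr2 mulr_suml; apply: ler_sum => i _; rewrite mulr_sumr.
apply: ler_sum => j _; have := sqr_ge0 (a i - a j); lra.
Qed.

Definition mxgain A : R := n%:R * \sum_i \sum_j A i j ^+ 2.

Lemma mxgain_ge0 A : 0 <= mxgain A.
Proof.
by rewrite mulr_ge0 // sumr_ge0 // => i _; rewrite sumr_ge0 // => j _; rewrite sqr_ge0.
Qed.

Lemma dotv_mxv_le A x : dotv (mxv A x) (mxv A x) <= mxgain A * dotv x x.
Proof.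
rewrite dotvv /mxv /mxgain -mulrA mulr_suml mulr_sumr; apply: ler_sum => i _.
apply: le_trans (sqr_sum_le _) _; rewrite ler_wpM2l // mulr_suml.
apply: ler_sum => j _; rewrite exprMn ler_wpM2l ?sqr_ge0 // dotvv.
by rewrite (bigD1 j) //= lerDl sumr_ge0 // => k _; rewrite sqr_ge0.
Qed.

Lemma mul2_dotv_le t x y : 2 * t * dotv x y <= dotv x x + t ^+ 2 * dotv y y.
Proof.
have : 0 <= \sum_i (x i - t * y i) ^+ 2 by rewrite sumr_ge0 // => i _; rewrite sqr_ge0.
have -> : \sum_i (x i - t * y i) ^+ 2 = dotv x x - 2 * t * dotv x y + t ^+ 2 * dotv y y.
  rewrite /dotv !mulr_sumr -sumrB -big_split /=.
  by apply: eq_bigr => i _; ring.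
lra.
Qed.

End RealMatrixVectorProduct.

(** * The graph Laplacian and the Poincare inequality *)

Section GraphLaplacian.
Variables (R : realType) (n : nat) (adj : rel 'I_n).
Implicit Types (h : 'I_n -> R) (e : edge_type adj).

Lemma edge_neq e : (val e).2 != (val e).1.
Proof. by apply/eqP => e21; move: (valP e); rewrite e21 ltnn andbF. Qed.

Lemma sum_incidence_mul e h :
  \sum_v incidence R v e * h v = h (val e).2 - h (val e).1.
Proof.
rewrite (bigD1 (val e).1) //= (bigD1 (val e).2) /= ?edge_neq //.
rewrite /incidence eqxx (negbTE (edge_neq e)) eqxx big1 ?addr0.
  by rewrite mulN1r mul1r addrC.
by move=> v /andP[/negbTE -> /negbTE ->]; rewrite mul0r.
Qed.

Definition dirichlet h : R :=
  \sum_(e : edge_type adj) (h (val e).2 - h (val e).1) ^+ 2.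

Lemma dirichlet_ge0 h : 0 <= dirichlet h.
Proof. by apply: sumr_ge0 => e _; apply: sqr_ge0. Qed.

Lemma laplacian_sym i j : laplacian R adj i j = laplacian R adj j i.
Proof. by rewrite !mxE; apply: eq_bigr => e _; rewrite mulrC. Qed.

Lemma laplacian_row_sum0 i : \sum_j laplacian R adj i j = 0.
Proof.
under eq_bigr do rewrite mxE.
rewrite exchange_big big1 //= => e _.
rewrite -mulr_sumr (eq_bigr _ (fun v _ => esym (mulr1 (incidence R v e)))).
by rewrite (sum_incidence_mul e (fun=> 1)) subrr mulr0.
Qed.

Lemma dotv_laplacian h : dotv h (mxv (laplacian R adj) h) = dirichlet h.
Proof.
have sqr_e e : (h (val e).2 - h (val e).1) ^+ 2 =
    \sum_v \sum_w (incidence R v e * h v) * (incidence R w e * h w).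
  rewrite expr2 -sum_incidence_mul mulr_suml.
  by apply: eq_bigr => v _; rewrite mulr_sumr.
rewrite /dirichlet /dotv /mxv; under [RHS]eq_bigr do rewrite sqr_e.
rewrite exchange_big /=; apply: eq_bigr => v _.
rewrite mulr_sumr exchange_big /=; apply: eq_bigr => w _.
by rewrite mxE mulr_suml mulr_sumr; apply: eq_bigr => e _; ring.
Qed.

Hypothesis adj_simple : simple_graph adj.

Lemma edge_dist_le h a b : adj a b -> `|h b - h a| <= Num.sqrt (dirichlet h).
Proof.
case: adj_simple => adj_irr adj_sym ab.
rewrite -sqrtr_sqr ler_sqrt ?dirichlet_ge0 //.
have edge_sqr_le c d (cd : adj c d && (c < d)%N) :
    (h d - h c) ^+ 2 <= dirichlet h.
  rewrite /dirichlet (bigD1 (exist _ (c, d) cd : edge_type adj)) //= lerDl.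
  by apply: sumr_ge0 => e _; apply: sqr_ge0.
case: (ltngtP a b) => [ltab|ltba|/val_inj eqab].
- by apply: edge_sqr_le; rewrite ab ltab.
- by rewrite -sqrrN opprB; apply: edge_sqr_le; rewrite adj_sym ab ltba.
- by move: ab; rewrite eqab adj_irr.
Qed.

Lemma path_dist_le h u p : path adj u p ->
  `|h (last u p) - h u| <= (size p)%:R * Num.sqrt (dirichlet h).
Proof.
elim: p u => [|w p IHp] u /=; first by rewrite subrr normr0 mul0r.
case/andP=> uw /IHp wp; rewrite -addn1 natrD mulrDl mul1r.
rewrite (_ : _ - h u = (h (last w p) - h w) + (h w - h u)); last by ring.
exact: le_trans (ler_normD _ _) (lerD wp (edge_dist_le h uw)).
Qed.

Hypothesis adj_connected : graph_connected adj.

Lemma connected_dist_le h u v :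
  `|h v - h u| <= n%:R * Num.sqrt (dirichlet h).
Proof.
case/connectP: (adj_connected u v) => p /shortenP[p' up' uniq_p' _] -> {p}.
apply: le_trans (path_dist_le h up') _.
rewrite ler_wpM2r ?sqrtr_ge0 // ler_nat.
have := uniq_leq_size uniq_p' (fun v _ => mem_enum 'I_n v).
by rewrite size_enum_ord /=; apply: ltnW.
Qed.

Lemma poincare h v0 : h v0 = 0 ->
  dotv h h <= (n ^ 3)%:R ^+ 2 *
    dotv (mxv (laplacian R adj) h) (mxv (laplacian R adj) h).
Proof.
move=> hv0; set c : R := (n ^ 3)%:R.
set Lh := mxv (laplacian R adj) h.
have hc : dotv h h <= c * dotv h Lh.
  rewrite dotvv /Lh dotv_laplacian /c natrX exprS -mulrA mulr_natl.
  rewrite -[n in _ *+ n]card_ord -sumr_const; apply: ler_sum => v _.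
  rewrite -(sqr_sqrtr (dirichlet_ge0 h)) -exprMn.
  have -> : h v = h v - h v0 by rewrite hv0 subr0.
  rewrite -real_normK ?num_real // ler_pXn2r ?nnegrE ?mulr_ge0 ?sqrtr_ge0 //.
  exact: connected_dist_le.
(* [|h|^2 <= c <h, L h>] and [2 c <h, L h> <= |h|^2 + c^2 |L h|^2]. *)
have := mul2_dotv_le c h Lh; have := dotvv_ge0 Lh.
have c0 : 0 <= c by rewrite ler0n.
nra.
Qed.

End GraphLaplacian.

(** * Accretivity of [L^2] on [l^p] *)

Section Accretivity.
Variables (R : realType) (n : nat) (L : 'M[R]_n) (K : R).
Hypothesis L_sym : forall i j, L i j = L j i.
Hypothesis L_row0 : forall i, \sum_j L i j = 0.
Hypothesis L_poincare :
  forall h v0, h v0 = 0 -> dotv h h <= K * dotv (mxv L h) (mxv L h).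

Lemma sqr_accretive q (x y : 'I_n -> R) : 0 <= q -> q * (K + mxgain L) <= 1 ->
  0 <= \sum_v norm2 (x v) (y v) `^ q *
         (x v * mxv L (mxv L x) v + y v * mxv L (mxv L y) v).
Proof.
move=> q0 qKC; set r := fun v => norm2 (x v) (y v).
have [v0 _|n0] := pickP (@predT 'I_n); last first.
  by rewrite big1 // => v; have := n0 v.
case: (@arg_maxP _ _ 'I_n v0 xpredT r isT) => vs _ r_max.
set M := r vs; set gx := fun j => x j - x vs; set gy := fun j => y j - y vs.
have [Lgx Lgy] : mxv L x = mxv L gx /\ mxv L y = mxv L gy.
  by rewrite !mxv_subr_const.
set Px := dotv (mxv L gx) (mxv L gx); set Py := dotv (mxv L gy) (mxv L gy).
have P0 : 0 <= Px + Py by rewrite addr_ge0 ?dotvv_ge0.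
have split_defect :
    \sum_v r v `^ q * (x v * mxv L (mxv L x) v + y v * mxv L (mxv L y) v)
  = M `^ q * (Px + Py) - \sum_v (M `^ q - r v `^ q) *
      (x v * mxv L (mxv L x) v + y v * mxv L (mxv L y) v).
  have -> : Px = dotv x (mxv L (mxv L x)) by rewrite -dotv_mxv_sym // Lgx.
  have -> : Py = dotv y (mxv L (mxv L y)) by rewrite -dotv_mxv_sym // Lgy.
  by rewrite /dotv -big_split /= mulr_sumr -sumrB; apply: eq_bigr => v _; ring.
have defect_le :
    \sum_v (M `^ q - r v `^ q) * (x v * mxv L (mxv L x) v + y v * mxv L (mxv L y) v)
    <= q * M `^ q / 2 * ((K + mxgain L) * (Px + Py)).
  apply: (@le_trans _ _ (\sum_v q * M `^ q / 2 * (gx v ^+ 2 + gy v ^+ 2 +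
      mxv L (mxv L gx) v ^+ 2 + mxv L (mxv L gy) v ^+ 2))).
    apply: ler_sum => v _; rewrite Lgx Lgy.
    apply: powR_defect_dot_le => //; first exact: r_max.
    rewrite /gx /gy /= -[x v - _]opprB -[y v - _]opprB !sqrrN; exact: sqr_norm2B_le.
  rewrite -mulr_sumr ler_wpM2l ?mulr_ge0 ?invr_ge0 ?powR_ge0 //.
  rewrite !big_split /= -!dotvv.
  have := @L_poincare gx vs (subrr _); have := @L_poincare gy vs (subrr _).
  have := dotv_mxv_le L (mxv L gx); have := dotv_mxv_le L (mxv L gy).
  rewrite -/Px -/Py; lra.
rewrite split_defect subr_ge0; apply: le_trans defect_le _.
have MqP : 0 <= M `^ q * (Px + Py) by rewrite mulr_ge0 ?powR_ge0.
have := ler_wpM2l MqP qKC; lra.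
Qed.

End Accretivity.

(** * The matrix exponential series *)

Lemma exp_coeff_dominated_series (R : realType) (u : R ^nat) (a C : R) :
  0 <= a -> 0 <= C -> (forall k, `|u k| <= C * exp_coeff a k) ->
  cvgn (series u) /\ `|limn (series u)| <= C * expR a.
Proof.
move=> a0 C0 u_le.
have cv : cvgn (series (fun k => C * exp_coeff a k)).
  exact: (is_cvg_seriesZ (k := C) (is_cvg_series_exp_coeff a)).
have cn : cvgn [normed series u].
  apply: (series_le_cvg _ _ u_le cv) => k //.
  by rewrite mulr_ge0 // exp_coeff_ge0.
split; first exact: normed_cvg.
apply: le_trans (lim_series_norm cn) _.
have -> : C * expR a = limn (series (fun k => C * exp_coeff a k)).
  exact: esym (lim_seriesZ C (is_cvg_series_exp_coeff a)).
exact: lim_series_le.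
Qed.

Lemma lim_series_sum (R : realType) (I : finType) (F : I -> R ^nat) :
  (forall l, cvgn (series (F l))) ->
  cvgn (series (fun k => \sum_l F l k)) /\
  limn (series (fun k => \sum_l F l k)) = \sum_l limn (series (F l)).
Proof.
move=> cvF.
have -> : series (fun k => \sum_l F l k) = (fun N => \sum_l series (F l) N).
  by apply: funext => N; rewrite /series /= exchange_big.
have lim_sum :
    ((fun N => \sum_l series (F l) N) @ \oo --> \sum_l limn (series (F l)))%classic.
  exact: (@cvg_big _ _ +%R 0 xpredT add_continuous _ _ _ (fun l N => series (F l) N)).
by split; [apply/cvg_ex; eexists; exact: lim_sum | exact: cvg_lim lim_sum].
Qed.

Lemma taylor2_exprn_le (R : realType) (x y M : R) k :
  1 <= M -> `|x| <= M -> `|y| <= M ->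
  `|x ^+ k - y ^+ k - k%:R * (x - y) * y ^+ k.-1|
    <= (k * k)%:R * (x - y) ^+ 2 * M ^+ k.
Proof.
move=> M1 xM yM; have M0 : 0 <= M by lra.
elim: k => [|k IHk].
  rewrite (_ : _ - _ = 0) ?normr0 ?mul0n ?mul0r //; rewrite !expr0; ring.
have -> : x ^+ k.+1 - y ^+ k.+1 - k.+1%:R * (x - y) * y ^+ k =
    x * (x ^+ k - y ^+ k - k%:R * (x - y) * y ^+ k.-1)
      + k%:R * (x - y) ^+ 2 * y ^+ k.-1.
  case: k {IHk} => [|k] /=; first by rewrite !expr0 !expr1; ring.
  by rewrite !(exprS x) !(exprS y) -[k.+2]addn2 -[k.+1]addn1 !natrD; ring.
apply: le_trans (ler_normD _ _) _.
have yk : `|y ^+ k.-1| <= M ^+ k.+1.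
  rewrite normrX; apply: (@le_trans _ _ (M ^+ k.-1)).
    by rewrite lerXn2r ?nnegrE.
  by rewrite ler_weXn2l // (leq_trans (leq_pred k)).
have IH' := ler_pM (normr_ge0 x) (normr_ge0 _) xM IHk.
have rest :
    `|k%:R * (x - y) ^+ 2 * y ^+ k.-1| <= k%:R * (x - y) ^+ 2 * M ^+ k.+1.
  rewrite normrM (ger0_norm (mulr_ge0 (ler0n R k) (sqr_ge0 (x - y)))).
  by rewrite ler_wpM2l // mulr_ge0 ?sqr_ge0.
rewrite normrM; apply: le_trans (lerD IH' rest) _.
have -> : M * ((k * k)%:R * (x - y) ^+ 2 * M ^+ k) =
    (k * k)%:R * (x - y) ^+ 2 * M ^+ k.+1 by rewrite [M ^+ k.+1]exprS; ring.
rewrite -!mulrDl ler_wpM2r ?exprn_ge0 // ler_wpM2r ?sqr_ge0 //.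
rewrite -natrD ler_nat; nia.
Qed.

Section MatrixExponential.
Variables (R : realType) (n : nat) (B : 'M[R]_n).
Implicit Types (s t T : R) (i j : 'I_n).

Definition mxrate : R := n%:R * \sum_i \sum_j `|B i j|.

Lemma mxrate_ge0 : 0 <= mxrate.
Proof. by rewrite mulr_ge0 // sumr_ge0 // => i _; rewrite sumr_ge0. Qed.

Lemma abs_exprn_le k i j : `|(B ^+ k) i j| <= mxrate ^+ k.
Proof.
have entry_le i' j' : `|B i' j'| <= \sum_i \sum_j `|B i j|.
  rewrite (bigD1 i') //= (bigD1 j') //= -addrA lerDl addr_ge0 //.
    by rewrite sumr_ge0.
  by rewrite sumr_ge0 // => i'' _; rewrite sumr_ge0.
elim: k i j => [|k IHk] i j.
  by rewrite expr0 mxE; case: (i == j); rewrite ?normr1 ?normr0.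
rewrite exprS -mulmxE mxE exprS; apply: le_trans (ler_norm_sum _ _ _) _.
apply: (@le_trans _ _ (\sum_(l < n) (\sum_i \sum_j `|B i j|) * mxrate ^+ k)).
  by apply: ler_sum => l _; rewrite normrM ler_pM.
by rewrite sumr_const card_ord -mulr_natl mulrA.
Qed.

Definition expmx_coef t i j (k : nat) : R :=
  (- t) ^+ k * (B ^+ k) i j / k`!%:R.

Lemma expmx_coefE t i j :
  expmx (- t *: B) i j = limn (series (expmx_coef t i j)).
Proof.
rewrite mxE /expmx_coef; congr (limn (series _)); apply: funext => k.
congr (_ / _); elim: k i j => [|k IHk] i j; first by rewrite !expr0 mul1r.
rewrite !exprS -!mulmxE !mxE mulr_sumr; apply: eq_bigr => l _.
by rewrite IHk mxE; ring.
Qed.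

Lemma expmx_coef_le t T i j k : `|t| <= T ->
  `|expmx_coef t i j k| <= exp_coeff (T * mxrate) k.
Proof.
move=> tT; have T0 : 0 <= T := le_trans (normr_ge0 t) tT.
rewrite /expmx_coef /exp_coeff /= normrM normfV normr_nat.
rewrite ler_wpM2r ?invr_ge0 // normrM normrX normrN exprMn.
by rewrite ler_pM ?exprn_ge0 ?lerXn2r ?nnegrE ?abs_exprn_le.
Qed.

Lemma expmx_coef_series t T i j : `|t| <= T ->
  cvgn (series (expmx_coef t i j)) /\
  `|limn (series (expmx_coef t i j))| <= expR (T * mxrate).
Proof.
move=> tT; have T0 : 0 <= T := le_trans (normr_ge0 t) tT.
rewrite -[expR _]mul1r; apply: exp_coeff_dominated_series.
- by rewrite mulr_ge0 ?mxrate_ge0.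
- by [].
- by move=> k; rewrite mul1r; apply: expmx_coef_le.
Qed.

Lemma abs_expmx_le t T i j : `|t| <= T ->
  `|expmx (- t *: B) i j| <= expR (T * mxrate).
Proof. by move=> tT; rewrite expmx_coefE; exact: (expmx_coef_series i j tT).2. Qed.

Lemma expmx_opp0 : expmx (- 0 *: B) = 1%:M.
Proof.
apply/matrixP => i j; rewrite expmx_coefE mxE.
suff : (series (expmx_coef 0 i j) @ \oo --> ((i == j)%:R : R))%classic.
  exact: cvg_lim.
apply: cvg_near_cst; near=> N.
have N0 : (0 < N)%N by near: N; exists 1%N.
rewrite -(prednK N0) seriesEord /= big_ord_recl /= big1 ?addr0.
  by rewrite /expmx_coef !expr0 mul1r fact0 divr1 mxE.
by move=> k _; rewrite /expmx_coef oppr0 expr0n /= !mul0r.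
Unshelve. all: by end_near.
Qed.

End MatrixExponential.

Section MatrixExponentialTaylor.
Variables (R : realType) (n : nat) (B : 'M[R]_n).
Implicit Types (s t T : R) (i j : 'I_n).

Definition expmx_dcoef t i j (k : nat) : R :=
  k%:R * (- t) ^+ k.-1 * (B ^+ k) i j / k`!%:R.

Lemma expmx_dcoef_series t T i j : `|t| <= T ->
  cvgn (series (expmx_dcoef t i j)) /\
  limn (series (expmx_dcoef t i j)) = \sum_l B i l * expmx (- t *: B) l j.
Proof.
move=> tT; set a := fun k => \sum_l B i l * expmx_coef B t l j k.
have [cva lima] := @lim_series_sum R _ (fun l k => B i l * expmx_coef B t l j k)
  (fun l => is_cvg_seriesZ (k := B i l) (expmx_coef_series B l j tT).1).
have {}lima : limn (series a) = \sum_l B i l * expmx (- t *: B) l j.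
  rewrite [LHS]lima; apply: eq_bigr => l _; rewrite expmx_coefE.
  exact: lim_seriesZ (expmx_coef_series B l j tT).1.
have shiftS : series (expmx_dcoef t i j) \o S = series a.
  apply: funext => N /=; rewrite !seriesEord /= big_ord_recl /=.
  rewrite [expmx_dcoef _ _ _ 0]/expmx_dcoef /= !mul0r add0r.
  apply: eq_bigr => k _.
  rewrite /bump leq0n add1n /a /expmx_dcoef /expmx_coef /=.
  rewrite exprS -mulmxE mxE factS natrM mulr_sumr !mulr_suml.
  apply: eq_bigr => l _; field.
  by rewrite nat1r !pnatr_eq0 -lt0n fact_gt0.
have cvd : (series (expmx_dcoef t i j) @ \oo --> limn (series a))%classic.
  by rewrite -cvg_shiftS -/(_ \o S) shiftS.
by rewrite -lima; split; [apply/cvg_ex; exists (limn (series a)) | exact: cvg_lim].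
Qed.

(* [k^2 <= 4^k] absorbs the factor [k^2] of [taylor2_exprn_le], which needs a
   bound [T + 1 >= 1] on [|s|] and [|t|]. *)
Lemma expmx_taylor_coef_le s t T i j k : `|s| <= T -> `|t| <= T ->
  `|expmx_coef B s i j k - expmx_coef B t i j k - (t - s) * expmx_dcoef t i j k|
    <= (t - s) ^+ 2 * exp_coeff (4 * (T + 1) * mxrate B) k.
Proof.
move=> sT tT; have T0 : 0 <= T := le_trans (normr_ge0 t) tT.
have -> : expmx_coef B s i j k - expmx_coef B t i j k
      - (t - s) * expmx_dcoef t i j k
    = ((- s) ^+ k - (- t) ^+ k - k%:R * (- s - - t) * (- t) ^+ k.-1)
      * (B ^+ k) i j / k`!%:R.
  by rewrite /expmx_coef /expmx_dcoef; ring.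
rewrite /exp_coeff /= normrM normfV normr_nat mulrA ler_wpM2r ?invr_ge0 //.
have taylor_k : `|(- s) ^+ k - (- t) ^+ k - k%:R * (- s - - t) * (- t) ^+ k.-1|
    <= (k * k)%:R * (- s - - t) ^+ 2 * (T + 1) ^+ k.
  by apply: taylor2_exprn_le; rewrite ?normrN; lra.
rewrite normrM.
apply: le_trans (ler_pM _ _ taylor_k (abs_exprn_le B k i j)) _ => //.
have four_k : (k * k)%:R <= 4 ^+ k :> R.
  rewrite -natrX ler_nat (_ : 4 = 2 * 2)%N // expnMn.
  by apply: leq_mul; apply: ltnW; apply: ltn_expl.
rewrite (_ : - s - - t = t - s); last by ring.
have X0 : 0 <= (t - s) ^+ 2 * (T + 1) ^+ k * mxrate B ^+ k.
  have T1 : 0 <= T + 1 by lra.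
  by rewrite mulr_ge0 ?exprn_ge0 ?mxrate_ge0 // mulr_ge0 ?sqr_ge0 ?exprn_ge0.
rewrite (_ : _ * (4 * (T + 1) * mxrate B) ^+ k
  = 4 ^+ k * ((t - s) ^+ 2 * (T + 1) ^+ k * mxrate B ^+ k)); last first.
  by rewrite !exprMn; ring.
have := ler_wpM2r X0 four_k; lra.
Qed.

Lemma expmx_taylor_le s t T i j : `|s| <= T -> `|t| <= T ->
  `|expmx (- s *: B) i j - expmx (- t *: B) i j
     - (t - s) * \sum_l B i l * expmx (- t *: B) l j|
    <= (t - s) ^+ 2 * expR (4 * (T + 1) * mxrate B).
Proof.
move=> sT tT; have T0 : 0 <= T := le_trans (normr_ge0 t) tT.
have [cvs _] := expmx_coef_series B i j sT.
have [cvt _] := expmx_coef_series B i j tT.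
have [cvd <-] := expmx_dcoef_series i j tT.
have cvtd := is_cvg_seriesZ (k := t - s) cvd.
set u := fun k => expmx_coef B s i j k - expmx_coef B t i j k
  - (t - s) * expmx_dcoef t i j k.
have -> : expmx (- s *: B) i j - expmx (- t *: B) i j
    - (t - s) * limn (series (expmx_dcoef t i j)) = limn (series u).
  have -> : u = (expmx_coef B s i j - expmx_coef B t i j)
      - (t - s) *: expmx_dcoef t i j by [].
  rewrite (lim_seriesB (is_cvg_seriesB cvs cvt) cvtd) (lim_seriesB cvs cvt).
  by rewrite (lim_seriesZ _ cvd) !expmx_coefE.
apply: (exp_coeff_dominated_series _ _
  (fun k => expmx_taylor_coef_le i j k sT tT)).2.
  by rewrite mulr_ge0 ?mxrate_ge0 // mulr_ge0 //; lra.
exact: sqr_ge0.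
Qed.

End MatrixExponentialTaylor.

(** * Contractivity of the semigroup *)

Lemma le_of_sqr_increments (R : realType) (G : R -> R) (T C : R) : 0 <= T ->
  (forall s t, 0 <= s -> s <= t -> t <= T -> G t - G s <= C * (t - s) ^+ 2) ->
  G T <= G 0.
Proof.
move=> T0 incr.
have subdiv N : (0 < N)%N -> G T - G 0 <= C * T ^+ 2 / N%:R.
  move=> N0; have N0' : 0 < N%:R :> R by rewrite ltr0n.
  set u := fun k : nat => G (k%:R * T / N%:R).
  have -> : G T - G 0 = \sum_(k < N) (u k.+1 - u k).
    rewrite -(big_mkord xpredT (fun k => u k.+1 - u k)) telescope_sumr //.
    by rewrite /u mul0r mul0r [_ * T]mulrC mulfK ?gt_eqF.
  have -> : C * T ^+ 2 / N%:R = \sum_(k < N) C * (T / N%:R) ^+ 2.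
    by rewrite sumr_const card_ord -mulr_natl; field; rewrite gt_eqF.
  apply: ler_sum => k _; have kN := ltn_ord k.
  have -> : T / N%:R = k.+1%:R * T / N%:R - k%:R * T / N%:R.
    by rewrite -nat1r; field; rewrite gt_eqF.
  apply: incr.
  - by rewrite divr_ge0 // mulr_ge0.
  - by rewrite ler_pM2r ?invr_gt0 // ler_wpM2r // ler_nat.
  - by rewrite ler_pdivrMr // mulrC ler_wpM2l // ler_nat.
rewrite -subr_le0; set d := G T - G 0 in subdiv *.
have [//|d0] := lerP d 0.
set N := (Num.truncn (C * T ^+ 2 / d)).+1.
have N0 : 0 < N%:R :> R by rewrite ltr0n.
have := subdiv N isT; rewrite ler_pdivlMr // => dN.
have := truncnS_gt (C * T ^+ 2 / d); rewrite -/N ltr_pdivrMr // mulrC.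
lra.
Qed.

Section FlowBounds.
Variables (R : realType) (n : nat) (B : 'M[R]_n) (a : 'I_n -> R).

Lemma abs_mxv_expmx_le t T v : `|t| <= T ->
  `|mxv (expmx (- t *: B)) a v| <= expR (T * mxrate B) * \sum_w `|a w|.
Proof.
move=> tT; rewrite /mxv mulr_sumr; apply: le_trans (ler_norm_sum _ _ _) _.
by apply: ler_sum => w _; rewrite normrM ler_wpM2r // abs_expmx_le.
Qed.

Lemma mxv_expmx_taylor_le s t T v : `|s| <= T -> `|t| <= T ->
  `|mxv (expmx (- s *: B)) a v - mxv (expmx (- t *: B)) a v
     - (t - s) * mxv B (mxv (expmx (- t *: B)) a) v|
    <= (t - s) ^+ 2 * expR (4 * (T + 1) * mxrate B) * \sum_w `|a w|.
Proof.
move=> sT tT; set E := expmx (- t *: B).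
have -> : mxv (expmx (- s *: B)) a v - mxv E a v - (t - s) * mxv B (mxv E a) v =
    \sum_w (expmx (- s *: B) v w - E v w - (t - s) * \sum_l B v l * E l w) * a w.
  rewrite /mxv -sumrB; under [X in _ - _ * X]eq_bigr do rewrite mulr_sumr.
  rewrite exchange_big /= mulr_sumr -sumrB; apply: eq_bigr => w _.
  rewrite (eq_bigr (fun l => B v l * E l w * a w)) -?mulr_suml; first ring.
  by move=> l _; rewrite mulrA.
rewrite mulr_sumr; apply: le_trans (ler_norm_sum _ _ _) _.
apply: ler_sum => w _; rewrite normrM ler_wpM2r //.
by apply: expmx_taylor_le.
Qed.

End FlowBounds.

Section LpFlow.
Variables (R : realType) (n : nat) (L : 'M[R]_n) (q : R).
Hypotheses (q_ge0 : 0 <= q) (q_le1 : q <= 1).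
Hypothesis L_accretive : forall x y : 'I_n -> R,
  0 <= \sum_v norm2 (x v) (y v) `^ q *
         (x v * mxv L (mxv L x) v + y v * mxv L (mxv L y) v).
Variables a b : 'I_n -> R.

(* [lp_flow t] is [|e^{-t L^2} (a + i b)|_p^p] for [p = 2 + q]. *)
Definition lp_flow t : R :=
  \sum_v norm2 (mxv (expmx (- t *: L ^+ 2)) a v)
               (mxv (expmx (- t *: L ^+ 2)) b v) `^ (2 + q).

Lemma lp_flow_increment_le T : 0 <= T -> exists C : R,
  forall s t, 0 <= s -> s <= t -> t <= T ->
    lp_flow t - lp_flow s <= C * (t - s) ^+ 2.
Proof.
move=> T0; set B := L ^+ 2; set p := 2 + q; set S := \sum_w (`|a w| + `|b w|).
set A := expR (T * mxrate B) * S; set D0 := expR (4 * (T + 1) * mxrate B) * S.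
exists (p * (n%:R * ((2 * A + 1) ^+ 2 * (2 * D0)))) => s t s0 st tT.
have [sT tT'] : `|s| <= T /\ `|t| <= T by rewrite !ger0_norm; lra.
have [Sa Sb] : \sum_w `|a w| <= S /\ \sum_w `|b w| <= S.
  by split; apply: ler_sum => w _; rewrite ?lerDl ?lerDr.
set X := mxv (expmx (- t *: B)) a; set Y := mxv (expmx (- t *: B)) b.
have [XA YA] : (forall v, `|X v| <= A) /\ (forall v, `|Y v| <= A).
  by split=> v; apply: le_trans (abs_mxv_expmx_le _ _ v tT')
    (ler_wpM2l (expR_ge0 _) _).
set D := (t - s) ^+ 2 * D0.
have E0 : 0 <= (t - s) ^+ 2 * expR (4 * (T + 1) * mxrate B).
  by rewrite mulr_ge0 ?sqr_ge0 ?expR_ge0.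
have step v := norm2_powR_step_le q_ge0 q_le1 (XA v) (YA v)
  (le_trans (mxv_expmx_taylor_le _ _ v sT tT') (ler_wpM2l E0 Sa))
  (le_trans (mxv_expmx_taylor_le _ _ v sT tT') (ler_wpM2l E0 Sb)).
rewrite /lp_flow -/B -/p -sumrB.
apply: le_trans (ler_sum _ (fun v _ => step v)) _.
rewrite big_split /= -mulr_sumr sumr_const card_ord.
have accr : 0 <= (p * (t - s)) *
    \sum_v norm2 (X v) (Y v) `^ q * (X v * mxv B X v + Y v * mxv B Y v).
  apply: mulr_ge0; first by rewrite mulr_ge0 ?subr_ge0 // /p addr_ge0.
  by have := L_accretive X Y; rewrite /B expr2 !mxvM.
apply: le_trans (lerD (_ : _ <= 0) (lexx _)) _; first by rewrite mulNr oppr_le0.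
rewrite add0r -[X in X <= _]mulr_natl le_eqVlt; apply/orP; left; apply/eqP.
by rewrite /D /D0 /p; ring.
Qed.

Lemma lp_flow_le_flow0 T : 0 <= T -> lp_flow T <= lp_flow 0.
Proof.
move=> T0; have [C incr] := lp_flow_increment_le T0.
exact: le_of_sqr_increments incr.
Qed.

End LpFlow.

Lemma Re_mxapp (R : realType) n (M : 'M[R]_n) (f : 'I_n -> R[i]) v :
  complex.Re (mxapp M f v) = mxv M (fun w => complex.Re (f w)) v.
Proof.
apply: esym; apply: (big_rec2 (fun (x : R) (z : R[i]) => x = complex.Re z)) => //.
by move=> w x z _ ->; case: (f w) => u1 u2; case: z => z1 z2 /=; ring.
Qed.

Lemma Im_mxapp (R : realType) n (M : 'M[R]_n) (f : 'I_n -> R[i]) v :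
  complex.Im (mxapp M f v) = mxv M (fun w => complex.Im (f w)) v.
Proof.
apply: esym; apply: (big_rec2 (fun (x : R) (z : R[i]) => x = complex.Im z)) => //.
by move=> w x z _ ->; case: (f w) => u1 u2; case: z => z1 z2 /=; ring.
Qed.

Theorem proposition2p4 (R : realType) (n : nat) (adj : rel 'I_n) :
  simple_graph adj -> graph_connected adj ->
  exists p : R, 2 < p /\
    forall (t : R), 0 <= t -> forall f : 'I_n -> R[i],
      lp_norm p (mxapp (expmx (- t *: (laplacian R adj ^+ 2))) f)
        <= lp_norm p f.
Proof.
move=> adj_simple adj_connected; set L := laplacian R adj.
set K : R := (n ^ 3)%:R ^+ 2; set q := (K + mxgain L + 1)^-1.
have KC0 : 0 <= K + mxgain L by rewrite addr_ge0 ?sqr_ge0 ?mxgain_ge0.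
have q0 : 0 < q by rewrite invr_gt0; lra.
have qKC : q * (K + mxgain L) <= 1 by rewrite ler_pdivrMl ?mulr1; lra.
have q1 : q <= 1 by rewrite invf_le1; lra.
have L_accretive x y := sqr_accretive (@laplacian_sym R n adj)
  (@laplacian_row_sum0 R n adj) (poincare adj_simple adj_connected) x y (ltW q0) qKC.
exists (2 + q); split=> [|t t0 f]; first lra.
set a := fun w => complex.Re (f w); set b := fun w => complex.Im (f w).
have := lp_flow_le_flow0 (ltW q0) q1 L_accretive a b t0.
rewrite /lp_flow expmx_opp0 !mxv1 => flow.
rewrite /lp_norm; apply: ge0_ler_powR; rewrite ?nnegrE ?invr_ge0.
- lra.
- by rewrite sumr_ge0 // => v _; rewrite powR_ge0.
- by rewrite sumr_ge0 // => v _; rewrite powR_ge0.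
- by under eq_bigr do rewrite /cmod Re_mxapp Im_mxapp.
Qed.
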